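(* For every instance with the dual metric loss, there exists a clustering in the $3$-core.
   Context: An instance with dual metric loss consists of a finite nonempty set $\mathcal{N}$ of $n$ agents, a finite nonempty set $\mathcal{M}$ of feasible centers, a positive integer $k$, a pseudometric $d^m$ on $\mathcal{N}$ (non-centroid metric), and a pseudometric $d^c$ on $\mathcal{N}\cup\mathcal{M}$ (centroid metric; only its values on $\mathcal{N}\times\mathcal{M}$ enter the losses). The loss of agent $i$ in a pair $(C,x)$ with $i\in C\subseteq\mathcal{N}$, $x\in\mathcal{M}$ is $\ell_i(C,x)=\max_{j\in C}d^m(i,j)+d^c(i,x)$. A clustering is $\mathcal{X}=\{(C_1,x_1),\dots,(C_k,x_k)\}$ with $C_1,\dots,C_k$ pairwise disjoint subsets of $\mathcal{N}$ (some possibly empty) with union $\mathcal{N}$ and $x_t\in\mathcal{M}$; $\ell_i(\mathcal{X})=\ell_i(C_t,x_t)$ for the unique $t$ with $i\in C_t$. For $\alpha\ge1$, $\mathcal{X}$ is in the $\alpha$-core if there is no $S\subseteq\mathcal{N}$ with $|S|\ge n/k$ and $y\in\mathcal{M}$ such that $\alpha\cdot\ell_i(S,y)<\ell_i(\mathcal{X})$ for all $i\in S$. *)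

From mathcomp Require Import all_boot all_order all_algebra.
Set Implicit Arguments. Unset Strict Implicit. Unset Printing Implicit Defensive.
Import Order.TTheory GRing.Theory Num.Theory.
Local Open Scope ring_scope.

Definition pseudometric (R : realFieldType) (T : Type) (d : T -> T -> R) : Prop :=
  [/\ forall x, d x x = 0,
      forall x y, d x y = d y x &
      forall x y z, d x z <= d x y + d y z].

Definition loss (R : realFieldType) (N M : finType)
  (dm : N -> N -> R) (dc : N + M -> N + M -> R)
  (i : N) (C : {set N}) (x : M) : R :=
  \big[Num.max/0]_(j in C) dm i j + dc (inl i) (inr x).

Definition is_clustering (N : finType) (k : nat) (C : 'I_k -> {set N}) : Prop :=
  (forall t t' : 'I_k, t != t' -> [disjoint C t & C t']) /\
  (forall i : N, exists t : 'I_k, i \in C t).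

Definition in_core (R : realFieldType) (N M : finType)
  (dm : N -> N -> R) (dc : N + M -> N + M -> R) (k : nat) (alpha : R)
  (C : 'I_k -> {set N}) (x : 'I_k -> M) : Prop :=
  ~ (exists (S : {set N}) (y : M),
        ((#|N|%:R / k%:R : R) <= #|S|%:R) /\
        (forall i, i \in S ->
           forall t : 'I_k, i \in C t ->
             alpha * loss dm dc i S y < loss dm dc i (C t) (x t))).

From mathcomp Require Import all_boot all_order all_algebra.
From mathcomp Require Import lra.
Import Order.TTheory GRing.Theory Num.Theory.
Local Open Scope ring_scope.
Set Implicit Arguments. Unset Strict Implicit. Unset Printing Implicit Defensive.

(* Greedy capture followed by reassignment.  Greedily remove from the
   remaining agents a coalition of size at least n/k whose worst member loss
   [lam] is smallest; this yields at most k groups, and every potential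
   blocking coalition (S, y) meets some group t with lam_t <= worst loss of
   (S, y).  Then every agent l moves to the group t minimising
   d(l,i) + maxdist(i, C_t) + lam_t/2 + d^c(l, x_t) over the members i of C_t
   with 2 d(l,i) <= lam_t.  In the resulting clustering a member i of S in
   group t has loss at most 3/2 lam_t; if it gains a factor 3 by deviating,
   its loss in S is below lam_t/2, which makes the worst-off member s of S
   eligible for group t through i, and the triangle inequality bounds the
   loss of s by less than three times its loss in S. *)

Lemma pseudometric_ge0 (R : realFieldType) (T : Type) (d : T -> T -> R) :
  pseudometric d -> forall x y, 0 <= d x y.
Proof. by case=> d0 dC dtr x y; have := dtr x y x; rewrite d0 (dC y x); lra. Qed.

Lemma exists_minimizer (R : realFieldType) (T : finType) (P : pred T) (F : T -> R) :
  (exists t, P t) -> exists t, P t /\ forall u, P u -> F t <= F u.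
Proof. by case=> t0 Pt0; case: (arg_minP F Pt0) => t Pt Fmin; exists t. Qed.

Definition fibre (N : finType) (k : nat) (f : N -> 'I_k) (t : 'I_k) : {set N} :=
  [set l | f l == t].

Lemma is_clustering_fibre (N : finType) (k : nat) (f : N -> 'I_k) :
  is_clustering (fibre f).
Proof.
split=> [t t' tt'|l]; last by exists (f l); rewrite inE.
apply/pred0P => l /=; rewrite !inE.
by apply/negP => /andP[/eqP flt /eqP flt']; rewrite -flt -flt' eqxx in tt'.
Qed.

Section DualMetricCore.

Variables (R : realFieldType) (N M : finType).
Variables (dm : N -> N -> R) (dc : N + M -> N + M -> R).
Implicit Types (i j l s : N) (A S : {set N}) (y : M).
Hypotheses (dm_pm : pseudometric dm) (dc_pm : pseudometric dc).

Definition maxdist (i : N) (A : {set N}) : R := \big[Num.max/0]_(j in A) dm i j.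

Definition worst_loss (S : {set N}) (y : M) : R :=
  \big[Num.max/0]_(s in S) loss dm dc s S y.

Lemma lossE i A y : loss dm dc i A y = maxdist i A + dc (inl i) (inr y).
Proof. by []. Qed.

Lemma maxdist_ge0 i A : 0 <= maxdist i A.
Proof.
apply: (big_ind (fun v => 0 <= v)) => // [a b a0 b0|j _]; first by rewrite le_max a0.
exact: pseudometric_ge0.
Qed.

Lemma le_maxdist i A j : j \in A -> dm i j <= maxdist i A.
Proof. exact: le_bigmax_cond. Qed.

Lemma loss_ge0 i A y : 0 <= loss dm dc i A y.
Proof. by rewrite lossE addr_ge0 ?maxdist_ge0 // pseudometric_ge0. Qed.

Lemma le_worst_loss S y s : s \in S -> loss dm dc s S y <= worst_loss S y.
Proof. exact: le_bigmax_cond. Qed.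

Lemma worst_loss_ge0 S y : 0 <= worst_loss S y.
Proof.
apply: (big_ind (fun v => 0 <= v)) => // [a b a0 b0|s _]; first by rewrite le_max a0.
exact: loss_ge0.
Qed.

Lemma worst_loss_attained S y i : i \in S ->
  exists2 s, s \in S & worst_loss S y = loss dm dc s S y.
Proof. by move=> iS; have [s] := eq_bigmax i _ _ iS (fun s _ => loss_ge0 s S y); exists s. Qed.

Section GreedyCapture.

Variables (q : R) (y0 : M).
Hypothesis q_gt0 : 0 < q.

Lemma cheapest_coalition (A S0 : {set N}) : S0 \subset A -> q <= #|S0|%:R ->
  exists (C0 : {set N}) (y : M), [/\ C0 \subset A, q <= #|C0|%:R &
    forall S y', S \subset A -> q <= #|S|%:R -> worst_loss C0 y <= worst_loss S y'].
Proof.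
move=> S0A S0q.
have [[C0 y] [/andP[/= C0A C0q] C0min]] :=
  @exists_minimizer R _ (fun p : {set N} * M => (p.1 \subset A) && (q <= #|p.1|%:R))
    (fun p => worst_loss p.1 p.2) (ex_intro _ (S0, y0) (introT andP (conj S0A S0q))).
exists C0, y; split=> // S y' SA Sq; exact: (C0min (S, y')) (introT andP (conj SA Sq)).
Qed.

Lemma card_setD_le m (A C0 : {set N}) : #|A|%:R <= m.+1%:R * q ->
  C0 \subset A -> q <= #|C0|%:R -> #|A :\: C0|%:R <= m%:R * q.
Proof.
move=> Aq /setIidPr C0A C0q.
have := cardsID C0 A; rewrite C0A => /(congr1 (fun n => n%:R : R)).
by rewrite natrD; move: Aq; rewrite -addn1 natrD mulrDl mul1r; lra.
Qed.

Lemma greedy_capture m (A : {set N}) : #|A|%:R <= m%:R * q ->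
  exists (C : nat -> {set N}) (x : nat -> M),
  (forall j, j \in A -> exists2 t, (t < m)%N & j \in C t) /\
  (forall S y, S \subset A -> q <= #|S|%:R -> exists t,
     [/\ (t < m)%N, worst_loss (C t) (x t) <= worst_loss S y & S :&: C t != set0]).
Proof.
elim: m A => [|m IH] A Aq.
  have -> : A = set0.
    by apply/eqP; rewrite -cards_eq0 -(@pnatr_eq0 R) eq_le ler0n andbT -(mul0r q).
  exists (fun _ => set0), (fun _ => y0); split=> [j|S y]; first by rewrite inE.
  by rewrite subset0 => /eqP ->; rewrite cards0 => /(lt_le_trans q_gt0); rewrite ltxx.
case: (boolP [exists S : {set N}, (S \subset A) && (q <= #|S|%:R)]) => [|no_big].
  case/existsP=> S0 /andP[S0A S0q].
  have [C0 [y [C0A C0q C0min]]] := cheapest_coalition S0A S0q.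
  have [C [x [cover capture]]] := IH _ (card_setD_le Aq C0A C0q).
  exists (fun t => if t is t'.+1 then C t' else C0),
         (fun t => if t is t'.+1 then x t' else y); split.
    move=> j jA; case: (boolP (j \in C0)) => jC0; first by exists 0%N.
    by have [|t tm jC] := cover j; [rewrite inE jC0 | exists t.+1].
  move=> S y' SA Sq; case: (boolP (S :&: C0 == set0)) => [/eqP SC0|]; last first.
    by exists 0%N; split=> //; apply: C0min.
  have [|t [tm tle meet]] := capture S y' _ Sq; last by exists t.+1.
  apply/subsetP=> i iS; rewrite inE (subsetP SA i iS) andbT.
  by apply/negP=> iC0; have := in_set0 i; rewrite -SC0 inE iS iC0.
exists (fun _ => A), (fun _ => y0); split=> [j jA|S y SA Sq]; first by exists 0%N.
by case/negP: no_big; apply/existsP; exists S; rewrite SA Sq.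
Qed.

End GreedyCapture.

Section Reassignment.

Variables (k : nat) (C : 'I_k -> {set N}) (x : 'I_k -> M).

Definition admissible (l : N) (t : 'I_k) (i : N) : bool :=
  (i \in C t) && (2 * dm l i <= worst_loss (C t) (x t)).

Definition via_cost (l : N) (t : 'I_k) (i : N) : R :=
  dm l i + maxdist i (C t) + worst_loss (C t) (x t) / 2 + dc (inl l) (inr (x t)).

Definition best_cluster (l : N) (t : 'I_k) : Prop :=
  (exists i, admissible l t i /\
     forall t' i', admissible l t' i' -> via_cost l t i <= via_cost l t' i')
  \/ ((forall t' i', ~~ admissible l t' i') /\ l \in C t).

Lemma admissible_self t i : i \in C t -> admissible i t i.
Proof. by case: dm_pm => dm0 _ _ iC; rewrite /admissible iC dm0 mulr0 worst_loss_ge0. Qed.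

Lemma exists_best_clusters : (forall l, exists t, l \in C t) ->
  exists f : N -> 'I_k, forall l, best_cluster l (f l).
Proof.
move=> cover; apply: fin_all_exists => l.
case: (boolP [exists p : 'I_k * N, admissible l p.1 p.2]) => [/existsP[p0 adm0]|none].
  have [[t i] [adm min]] := @exists_minimizer R _ (fun p => admissible l p.1 p.2)
     (fun p => via_cost l p.1 p.2) (ex_intro _ p0 adm0).
  by exists t; left; exists i; split=> // t' i' adm'; apply: (min (t', i')).
have [t lC] := cover l; exists t; right; split=> // t' i'.
by apply/negP=> adm; case/negP: none; apply/existsP; exists (t', i').
Qed.

Lemma via_cost_self t i : i \in C t -> via_cost i t i <= 3 / 2 * worst_loss (C t) (x t).
Proof.
case: dm_pm => dm0 _ _ iC; have := le_worst_loss (x t) iC.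
by rewrite /via_cost lossE dm0; lra.
Qed.

Lemma via_cost_le l t i y : i \in C t ->
  via_cost l t i <= dm l i + dc (inl l) (inr y) + dc (inl i) (inr y)
                    + 3 / 2 * worst_loss (C t) (x t).
Proof.
case: dc_pm => _ dcC dctr iC; have := le_worst_loss (x t) iC.
have := dctr (inl l) (inr y) (inr (x t)); have := dctr (inr y) (inl i) (inr (x t)).
by rewrite /via_cost lossE (dcC (inr y) (inl i)); lra.
Qed.

Variables (f : N -> 'I_k).
Hypothesis f_best : forall l, best_cluster l (f l).

Lemma fibre_admissible t m : m \in fibre f t -> exists i, admissible m t i.
Proof.
rewrite inE => /eqP <-.
by case: (f_best m) => [[i [adm _]]|[none mC]]; [exists i | exists m; apply: admissible_self].
Qed.

(* Every member m of fibre t reaches C_t within lam_t/2, whence the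
   triangle inequality through i and the member of C_t near m. *)
Lemma maxdist_fibre_le l t i :
  maxdist l (fibre f t) <= dm l i + maxdist i (C t) + worst_loss (C t) (x t) / 2.
Proof.
have [_ dmC dmtr] := dm_pm.
apply: bigmax_le => [|m /fibre_admissible[j /andP[jC jm]]].
  have := pseudometric_ge0 dm_pm l i; have := maxdist_ge0 i (C t).
  have := worst_loss_ge0 (C t) (x t); lra.
have := dmtr l i m; have := dmtr i j m; have := le_maxdist i jC.
by rewrite (dmC m j) in jm; lra.
Qed.

Lemma loss_fibre_le l t i : admissible l t i ->
  loss dm dc l (fibre f (f l)) (x (f l)) <= via_cost l t i.
Proof.
move=> adm; case: (f_best l) => [[i0 [_ min]]|[none _]]; last by have := none t i; rewrite adm.
apply: le_trans (min t i adm).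
by rewrite lossE /via_cost lerD2r maxdist_fibre_le.
Qed.

Lemma fibre_in_core :
  (forall S y, (#|N|%:R / k%:R : R) <= #|S|%:R -> exists t,
     worst_loss (C t) (x t) <= worst_loss S y /\ S :&: C t != set0) ->
  in_core dm dc 3 (fibre f) x.
Proof.
move=> capture [S [y [Sq block]]].
have [t [lam_le /set0Pn[i /setIP[iS iC]]]] := capture S y Sq.
have blockS l : l \in S -> 3 * loss dm dc l S y < loss dm dc l (fibre f (f l)) (x (f l)).
  by move=> lS; apply: block; rewrite ?inE.
have i_close : 2 * loss dm dc i S y < worst_loss (C t) (x t).
  have := loss_fibre_le (admissible_self iC); have := via_cost_self iC.
  have := blockS i iS; lra.
have [s sS s_worst] := worst_loss_attained y iS.
have si : dm s i <= maxdist i S by case: dm_pm => _ dmC _; rewrite dmC le_maxdist.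
have si_adm : admissible s t i.
  by rewrite /admissible iC; move: i_close; rewrite lossE;
     have := pseudometric_ge0 dc_pm (inl i) (inr y); lra.
have := loss_fibre_le si_adm; have := via_cost_le s y iC; have := blockS s sS.
have := maxdist_ge0 s S; move: i_close lam_le; rewrite s_worst !lossE; lra.
Qed.

End Reassignment.

End DualMetricCore.

Theorem mainTheorem3 (R : realFieldType) (N M : finType) (k : nat)
  (dm : N -> N -> R) (dc : N + M -> N + M -> R) :
  (0 < #|N|)%N -> (0 < #|M|)%N -> (0 < k)%N ->
  pseudometric dm -> pseudometric dc ->
  exists (C : 'I_k -> {set N}) (x : 'I_k -> M),
    is_clustering C /\ in_core dm dc 3 C x.
Proof.
move=> n_gt0 /card_gt0P[y0 _] k_gt0 dm_pm dc_pm.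
have k_neq0 : k%:R != 0 :> R by rewrite pnatr_eq0 -lt0n.
have q_gt0 : 0 < #|N|%:R / k%:R :> R by rewrite divr_gt0 ?ltr0n.
have N_le : #|[set: N]|%:R <= k%:R * (#|N|%:R / k%:R) :> R.
  by rewrite cardsT mulrC divfK.
have [C [x [cover capture]]] := greedy_capture dm dc y0 q_gt0 N_le.
have [f f_best] : exists f : N -> 'I_k,
    forall l, best_cluster dm dc (fun t => C t) (fun t => x t) l (f l).
  apply: exists_best_clusters => l.
  by have [t tk lC] := cover l (in_setT l); exists (Ordinal tk).
exists (fibre f), (fun t => x t); split; first exact: is_clustering_fibre.
apply: (fibre_in_core dm_pm dc_pm f_best) => S y Sq.
by have [t [tk t_le meet]] := capture S y (subsetT S) Sq; exists (Ordinal tk).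
Qed.
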